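(* Let $(Q,P)$ be a weakly quasi-lattice ordered group and let $\Lambda$ be a finitely aligned $P$-graph. Then the collection of sets $Z(\mu\setminus K)=\{x\in\mathcal{F}(\Lambda):\mu\in x,\ x\cap K=\emptyset\}$, where $\mu\in\Lambda$ and $K\subseteq\mu\Lambda$ is finite, is a basis for the topology of $\mathcal{F}(\Lambda)$.
   Context: $(Q,P)$ weakly quasi-lattice ordered: $Q$ a discrete group, $P\subseteq Q$ a subsemigroup containing the identity $e$ with $P\cap P^{-1}=\{e\}$, and, with $p\le r$ meaning $pq=r$ for some $q\in P$, any two elements of $P$ with a common upper bound have a least common upper bound. A $P$-graph is a countable small category $\Lambda$ (range/source $r,s$) with a functor $d:\Lambda\to P$ with unique factorisation (if $d(\lambda)=pq$ there are unique $\mu,\nu$ with $\lambda=\mu\nu$, $d(\mu)=p$, $d(\nu)=q$). Write $\lambda\Lambda=\{\lambda\mu: s(\lambda)=r(\mu)\}$, $\mu\preceq\lambda$ iff $\lambda\in\mu\Lambda$. $\Lambda$ is finitely aligned if for all $\mu,\nu\in\Lambda$ there is a finite (possibly empty) $J\subseteq\Lambda$ with $\mu\Lambda\cap\nu\Lambda=\bigcup_{\kappa\in J}\kappa\Lambda$. A filter is a nonempty hereditary and directed subset of $\Lambda$ (w.r.t. $\preceq$); $\mathcal{F}(\Lambda)$ is the set of filters, with the subspace topology from $\mathcal{P}(\Lambda)\cong\{0,1\}^\Lambda$ carrying the product topology (basis $\{x: K_1\subseteq x\subseteq\Lambda\setminus K_2\}$, $K_1,K_2$ finite). *)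

From Stdlib Require Import List.
Import ListNotations.
Set Implicit Arguments.

Record wqlo := WQLO {
  Q : Type;
  mul : Q -> Q -> Q;
  e : Q;
  inv : Q -> Q;
  mulA : forall a b c, mul a (mul b c) = mul (mul a b) c;
  mul1q : forall a, mul e a = a;
  mulq1 : forall a, mul a e = a;
  mulVq : forall a, mul (inv a) a = e;
  mulqV : forall a, mul a (inv a) = e;
  P : Q -> Prop;
  P_e : P e;
  P_mul : forall p q, P p -> P q -> P (mul p q);
  P_cap_Pinv : forall p, P p -> P (inv p) -> p = e;
  (* two elements of P with a common upper bound have a least common upper bound *)
  P_wqlo : forall p q, P p -> P q ->
    (exists r, P r /\ (exists a, P a /\ mul p a = r) /\ (exists b, P b /\ mul q b = r)) ->
    exists l, P l /\ (exists a, P a /\ mul p a = l) /\ (exists b, P b /\ mul q b = l) /\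
      forall r, P r -> (exists a, P a /\ mul p a = r) -> (exists b, P b /\ mul q b = r) ->
        exists c, P c /\ mul l c = r
}.

Definition Ple (G : wqlo) (p r : Q G) : Prop := exists q, P G q /\ mul G p q = r.

(** Composition is a total function, only meaningful (and only
    constrained) on composable pairs (s λ = r μ), written comp λ μ = λμ. *)
Record Pgraph (G : wqlo) := PGraph {
  Obj : Type;
  Mor : Type;
  rng : Mor -> Obj;
  src : Mor -> Obj;
  idm : Obj -> Mor;
  comp : Mor -> Mor -> Mor;
  rng_id : forall v, rng (idm v) = v;
  src_id : forall v, src (idm v) = v;
  rng_comp : forall l m, src l = rng m -> rng (comp l m) = rng l;
  src_comp : forall l m, src l = rng m -> src (comp l m) = src m;
  comp_id_l : forall l, comp (idm (rng l)) l = l;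
  comp_id_r : forall l, comp l (idm (src l)) = l;
  compA : forall l m n, src l = rng m -> src m = rng n ->
            comp l (comp m n) = comp (comp l m) n;
  Obj_countable : exists f : Obj -> nat, forall a b, f a = f b -> a = b;
  Mor_countable : exists f : Mor -> nat, forall a b, f a = f b -> a = b;
  deg : Mor -> Q G;
  deg_P : forall l, P G (deg l);
  deg_id : forall v, deg (idm v) = e G;
  deg_comp : forall l m, src l = rng m -> deg (comp l m) = mul G (deg l) (deg m);
  unique_fact : forall l p q, P G p -> P G q -> deg l = mul G p q ->
    exists m n, src m = rng n /\ l = comp m n /\ deg m = p /\ deg n = q /\
      forall m' n', src m' = rng n' -> l = comp m' n' -> deg m' = p -> deg n' = q ->
        m' = m /\ n' = n
}.

Section PgraphDefs.
Variable G : wqlo.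
Variable L : Pgraph G.

Definition inpath (mu lam : Mor L) : Prop :=
  exists nu, src L mu = rng L nu /\ lam = comp L mu nu.

Definition prec (mu lam : Mor L) : Prop := inpath mu lam.

Definition finitely_aligned : Prop :=
  forall mu nu, exists J : list (Mor L),
    forall lam, (inpath mu lam /\ inpath nu lam) <-> exists k, In k J /\ inpath k lam.

(** subsets of Λ, i.e. elements of P(Λ) ≅ {0,1}^Λ *)
Definition subsetL := Mor L -> Prop.

Definition is_filter (x : subsetL) : Prop :=
  (exists l, x l) /\
  (forall l m, x l -> prec m l -> x m) /\
  (forall l m, x l -> x m -> exists n, x n /\ prec l n /\ prec m n).

(** basic open sets {x : K1 ⊆ x ⊆ Λ \ K2} of the product topology *)
Definition basic_open (K1 K2 : list (Mor L)) (x : subsetL) : Prop :=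
  (forall k, In k K1 -> x k) /\ (forall k, In k K2 -> ~ x k).

Definition openP (U : subsetL -> Prop) : Prop :=
  forall x, U x -> exists K1 K2, basic_open K1 K2 x /\
    forall y, basic_open K1 K2 y -> U y.

Definition openF (V : subsetL -> Prop) : Prop :=
  exists U, openP U /\ forall x, V x <-> (is_filter x /\ U x).

Definition is_basisF (B : (subsetL -> Prop) -> Prop) : Prop :=
  (forall S, B S -> openF S) /\
  (forall V, openF V -> forall x, V x ->
     exists S, B S /\ S x /\ forall y, S y -> V y).

Definition Zset (mu : Mor L) (K : list (Mor L)) (x : subsetL) : Prop :=
  is_filter x /\ x mu /\ forall k, In k K -> ~ x k.

Definition Zcollection (S : subsetL -> Prop) : Prop :=
  exists mu K, (forall k, In k K -> inpath mu k) /\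
    forall x, S x <-> Zset mu K x.

End PgraphDefs.

(* A basic neighbourhood {y : K1 ⊆ y, y ∩ K2 = ∅} of a filter x contains some Z(μ \ K)
   around x.  Being directed, x contains an upper bound μ of K1, and every filter containing μ
   contains K1.  For k ∈ K2, a filter containing μ and k contains a common extension of both,
   hence by finite alignment (μΛ ∩ kΛ = ⋃_{κ ∈ J} κΛ) one of the finitely many κ ∈ J ⊆ μΛ;
   so excluding J excludes k.  Being hereditary, x avoids J because it avoids k. *)

From Stdlib Require Import List.
Import ListNotations.

Section FiltersOfPgraph.
Context {G : wqlo} {L : Pgraph G}.

Local Notation prec := (@prec G L).
Local Notation inpath := (@inpath G L).

Lemma prec_refl (k : Mor L) : prec k k.
Proof. exists (idm L (src L k)). rewrite rng_id, comp_id_r. auto. Qed.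

Lemma prec_trans {a b c : Mor L} : prec a b -> prec b c -> prec a c.
Proof.
  intros [n1 [H1 ->]] [n2 [H2 ->]].
  rewrite src_comp in H2 by exact H1.
  exists (comp L n1 n2). split.
  - rewrite rng_comp by exact H2. exact H1.
  - symmetry. apply compA; assumption.
Qed.

Lemma filter_hereditary {x : subsetL L} {l m : Mor L} :
  is_filter x -> x l -> prec m l -> x m.
Proof. intros [_ [Hher _]]. apply Hher. Qed.

Lemma filter_upper_bound {x : subsetL L} {K : list (Mor L)} :
  is_filter x -> (forall k, In k K -> x k) ->
  exists mu, x mu /\ forall k, In k K -> prec k mu.
Proof.
  intros Fx. destruct Fx as [[l Hl] [_ Hdir]].
  induction K as [|a K IH]; intros HK.
  - exists l. split; [exact Hl | intros k []].
  - destruct IH as [m [Hm Hbound]]; [intros k Hk; apply HK; now right |].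
    destruct (Hdir m a Hm (HK a (or_introl eq_refl))) as [n [Hn [Hmn Han]]].
    exists n. split; [exact Hn |]. intros k [<- | Hk].
    + exact Han.
    + exact (prec_trans (Hbound k Hk) Hmn).
Qed.

Section CommonExtensions.
Context {mu k : Mor L} {J : list (Mor L)}.
Hypothesis HJ : forall lam,
  (inpath mu lam /\ inpath k lam) <-> exists c, In c J /\ inpath c lam.

Lemma common_extension_prec {c : Mor L} : In c J -> prec mu c /\ prec k c.
Proof. intros Hc. apply HJ. exists c. split; [exact Hc | apply prec_refl]. Qed.

Lemma filter_meets_common_extension {y : subsetL L} :
  is_filter y -> y mu -> y k -> exists c, In c J /\ y c.
Proof.
  intros Fy Hmu Hk. pose proof Fy as [_ [_ Hdir]].
  destruct (Hdir mu k Hmu Hk) as [n [Hn [Hmun Hkn]]].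
  destruct (proj1 (HJ n) (conj Hmun Hkn)) as [c [Hc Hcn]].
  exists c. split; [exact Hc | exact (filter_hereditary Fy Hn Hcn)].
Qed.

End CommonExtensions.

Lemma Zset_basic_open (mu : Mor L) (K : list (Mor L)) (x : subsetL L) :
  Zset mu K x <-> is_filter x /\ basic_open [mu] K x.
Proof.
  unfold Zset, basic_open. split.
  - intros [Fx [Hmu HK]]. split; [exact Fx | split; [now intros m [<- | []] | exact HK]].
  - intros [Fx [Hmu HK]]. split; [exact Fx | split; [apply Hmu; now left | exact HK]].
Qed.

Lemma Zcollection_openF (S : subsetL L -> Prop) : Zcollection S -> openF S.
Proof.
  intros [mu [K [_ HS]]].
  exists (basic_open [mu] K). split.
  - intros x Hx. exists [mu], K. auto.
  - intros x. rewrite HS. apply Zset_basic_open.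
Qed.

Lemma exclusion_by_extensions {x : subsetL L} (mu : Mor L) {k : Mor L} :
  finitely_aligned L -> is_filter x -> ~ x k ->
  exists J, (forall c, In c J -> inpath mu c /\ ~ x c) /\
    forall y, is_filter y -> y mu -> (forall c, In c J -> ~ y c) -> ~ y k.
Proof.
  intros FA Fx Hxk. destruct (FA mu k) as [J HJ].
  exists J. split.
  - intros c Hc. destruct (common_extension_prec HJ Hc) as [Hmuc Hkc].
    split; [exact Hmuc |]. intros Hxc. exact (Hxk (filter_hereditary Fx Hxc Hkc)).
  - intros y Fy Hymu Hy Hyk.
    destruct (filter_meets_common_extension HJ Fy Hymu Hyk) as [c [Hc Hyc]].
    exact (Hy c Hc Hyc).
Qed.

Lemma exclusions_by_extensions {x : subsetL L} (mu : Mor L) {K2 : list (Mor L)} :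
  finitely_aligned L -> is_filter x -> (forall k, In k K2 -> ~ x k) ->
  exists K, (forall c, In c K -> inpath mu c /\ ~ x c) /\
    forall y, is_filter y -> y mu -> (forall c, In c K -> ~ y c) ->
      forall k, In k K2 -> ~ y k.
Proof.
  intros FA Fx. induction K2 as [|a K2 IH]; intros HK2.
  - exists []. split; [intros c [] | intros y _ _ _ k []].
  - destruct IH as [K [HKx HKy]]; [intros k Hk; apply HK2; now right |].
    destruct (exclusion_by_extensions mu FA Fx (HK2 a (or_introl eq_refl)))
      as [J [HJx HJy]].
    exists (J ++ K). split.
    + intros c Hc. apply in_app_or in Hc as [Hc | Hc]; auto.
    + intros y Fy Hymu Hy k [<- | Hk].
      * apply (HJy y Fy Hymu). intros c Hc. apply Hy, in_or_app. now left.
      * apply (HKy y Fy Hymu); [| exact Hk]. intros c Hc. apply Hy, in_or_app. now right.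
Qed.

Lemma Zcollection_refines_openF {V : subsetL L -> Prop} {x : subsetL L} :
  finitely_aligned L -> openF V -> V x ->
  exists S, Zcollection S /\ S x /\ forall y, S y -> V y.
Proof.
  intros FA [U [HU HV]] Hx.
  destruct (proj1 (HV x) Hx) as [Fx Ux].
  destruct (HU x Ux) as [K1 [K2 [[HK1 HK2] HUopen]]].
  destruct (filter_upper_bound Fx HK1) as [mu [Hmu Hbound]].
  destruct (exclusions_by_extensions mu FA Fx HK2) as [K [HKx HKy]].
  exists (Zset mu K). split; [| split].
  - exists mu, K. split; [intros c Hc; apply HKx, Hc | tauto].
  - split; [exact Fx | split; [exact Hmu | intros c Hc; apply HKx, Hc]].
  - intros y [Fy [Hymu Hy]]. apply HV. split; [exact Fy |].
    apply HUopen. split.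
    + intros k Hk. exact (filter_hereditary Fy Hymu (Hbound k Hk)).
    + exact (HKy y Fy Hymu Hy).
Qed.

End FiltersOfPgraph.

Theorem lemma6p2 (G : wqlo) (L : Pgraph G) :
  finitely_aligned L -> is_basisF (@Zcollection G L).
Proof.
  intros FA. split.
  - apply Zcollection_openF.
  - intros V HV x Hx. exact (Zcollection_refines_openF FA HV Hx).
Qed.
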